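(* Let $G$ be a scheduling game on $m$ identical machines of speed $1$ in which every job $i$ has processing-time function $p_i(t)=b_i+at$ with $b_i\ge0$ and a common rate $a>0$, and in which all machines use the SBPT global priority list (non-decreasing order of $b_i$, ties broken arbitrarily). Then every pure Nash equilibrium $\sigma$ of $G$ satisfies $$C_{\max}(\sigma)\le\frac{2m+am-1}{m+a}\cdot OPT(G).$$
   Context: Scheduling game: a finite set $N$ of $n$ jobs (players) and a set $M$ of $m$ machines; machine $j$ has speed $s_j>0$. With a global priority list, all machines share the same bijection $\pi:N\to\{1,\dots,n\}$, and job $u$ has higher priority than $v$ iff $\pi(u)<\pi(v)$. A profile $\sigma\in M^N$ assigns each job to a machine. On machine $j$, the jobs assigned to it, listed in increasing $\pi$-order as $i_1,i_2,\dots$, are processed without idle time: $S_{i_1}(\sigma)=0$, $C_{i_k}(\sigma)=S_{i_k}(\sigma)+p_{i_k}(S_{i_k}(\sigma))/s_j$, $S_{i_{k+1}}(\sigma)=C_{i_k}(\sigma)$. The cost of job $i$ is $C_i(\sigma)$. A pure Nash equilibrium (NE) is a profile in which no job can strictly decrease its completion time by unilaterally changing its machine. Makespan $C_{\max}(\sigma)=\max_iC_i(\sigma)$; $OPT(G)=\min_\sigma C_{\max}(\sigma)$ over all profiles. *)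

From HB Require Import structures.
From mathcomp Require Import all_boot all_order all_algebra all_fingroup.
Set Implicit Arguments. Unset Strict Implicit. Unset Printing Implicit Defensive.
Import Order.TTheory GRing.Theory Num.Theory.
Local Open Scope ring_scope.

Section Game.
Variables (R : realFieldType) (n m : nat).
Variable (s : 'I_m -> R).
Variable (p : 'I_n -> R -> R).
Variable (pi : {perm 'I_n}).           (* global priority: pi u = rank of u *)

Definition profile := {ffun 'I_n -> 'I_m}.

Definition prio_order : seq 'I_n := [seq (pi^-1)%g r | r <- enum 'I_n].

Definition jobs_upto (sigma : profile) (i : 'I_n) : seq 'I_n :=
  [seq k <- prio_order | (sigma k == sigma i) && (pi k <= pi i)%N].

(* completion time: processed without idle time starting at 0,
   C = S + p(S)/s, next start = previous completion *)
Definition completion (sigma : profile) (i : 'I_n) : R :=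
  foldl (fun t k => t + p k t / s (sigma i)) 0 (jobs_upto sigma i).

Definition deviate (sigma : profile) (i : 'I_n) (j : 'I_m) : profile :=
  [ffun k => if k == i then j else sigma k].

Definition is_NE (sigma : profile) : Prop :=
  forall (i : 'I_n) (j : 'I_m), completion sigma i <= completion (deviate sigma i j) i.

Definition makespan (sigma : profile) : R :=
  \big[Num.max/0]_(i : 'I_n) completion sigma i.

(* OPT(G): minimum makespan over all profiles (sigma0 is any profile,
   only used as the initial value of the finite minimum; it is among the
   profiles minimized over, so the value does not depend on it) *)
Definition OPT (sigma0 : profile) : R :=
  \big[Num.min/makespan sigma0]_(tau : profile) makespan tau.
End Game.

Definition SBPT (R : realFieldType) (n : nat) (b : 'I_n -> R) (pi : {perm 'I_n}) : Prop :=
  forall u v : 'I_n, (pi u < pi v)%N -> b u <= b v.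

From HB Require Import structures.
From mathcomp Require Import all_boot all_order all_algebra all_fingroup.
From mathcomp Require Import zify ring lra.
Import Order.TTheory GRing.Theory Num.Theory.
Local Open Scope ring_scope.
Set Implicit Arguments. Unset Strict Implicit. Unset Printing Implicit Defensive.

(* With [p_i(t) = b_i + a t] a job started at time [L] ends at [(1 + a) L + b_i],
   so along the priority list every machine load evolves by [L |-> (1 + a) L + b].
   In an equilibrium job [i] starts no later than the current load of any machine;
   as some machine receives none of the [m - 1] jobs preceding [i], induction along
   the list gives [(m + a) S_i + b_i <= R_i], where [R_i] is the total load of the
   jobs up to [i] dealt round robin backwards from [i].  In any schedule at most
   [m s] of these jobs are followed on their machine by fewer than [s] jobs;
   splitting [(1 + a)^c] into nonnegative layers and using that the [b]'s are
   sorted, [R_i] is at most the total load, hence at most [m OPT].  Together with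
   [b_i <= OPT] this yields [(m + a) C_i <= ((1 + a) m + m - 1) OPT]. *)

Section SortedSums.
Variables (R : realFieldType) (x : nat -> R) (t : nat).
Hypotheses (x_ge0 : forall r, 0 <= x r)
           (x_sorted : forall r r', (r <= r' < t)%N -> x r <= x r').

Lemma sum_prefix_le_sum (A : pred nat) K :
  (K <= \sum_(0 <= r < t) A r)%N ->
  \sum_(0 <= r < K) x r <= \sum_(0 <= r < t | A r) x r.
Proof.
elim: t x_sorted K => [|u IH] sorted K.
  by rewrite big_geq // leqn0 => /eqP->; rewrite !big_geq.
have sorted_u : forall r r', (r <= r' < u)%N -> x r <= x r'.
  by move=> r r' /andP[rr' r'u]; apply: sorted; rewrite rr' ltnW.
have count_u : (\sum_(0 <= r < u) A r <= u)%N.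
  rewrite (leq_trans (@leq_sum _ _ _ _ (fun=> 1%N) (fun r _ => leq_b1 (A r)))) //.
  by rewrite sum_nat_const_nat muln1 subn0.
rewrite (big_mkcond A x) !big_nat_recr //= -(big_mkcond A x).
case: (A u) => /=; last by rewrite addn0 addr0; exact: (IH sorted_u).
case: K => [_|K]; first by rewrite big_geq // addr_ge0 ?sumr_ge0.
rewrite addn1 ltnS big_nat_recr //= => hK; apply: lerD; first exact: (IH sorted_u).
by apply: sorted; rewrite ltnSn andbT; lia.
Qed.

End SortedSums.

Section GeometricRearrangement.
Variables (R : realFieldType) (q : R).
Hypothesis q_ge1 : 1 <= q.

(* The layers telescope: [q ^+ c] is the sum of layers [0] to [c]. *)
Let layer s := if s is s'.+1 then (q - 1) * q ^+ s' else 1.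

Let layer_ge0 s : 0 <= layer s.
Proof.
case: s => [|s] //=; apply: mulr_ge0; first by rewrite subr_ge0.
by rewrite exprn_ge0 // (le_trans ler01).
Qed.

Let expr_layers c T : (c <= T)%N ->
  q ^+ c = \sum_(0 <= s < T.+1 | (s <= c)%N) layer s.
Proof.
move=> cT; rewrite (eq_bigl (fun s => xpredT s && (s < c.+1)%N)) //.
rewrite -big_nat_widen ?ltnS //.
elim: c {cT} => [|c IH]; first by rewrite big_nat1.
by rewrite big_nat_recr //= -IH exprS; ring.
Qed.

Let sum_expr_layers (x : nat -> R) (c : nat -> nat) t :
  (forall r, (r < t)%N -> (c r <= t)%N) ->
  \sum_(0 <= r < t) x r * q ^+ c r =
  \sum_(0 <= s < t.+1) layer s * \sum_(0 <= r < t | (s <= c r)%N) x r.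
Proof.
move=> c_le; under eq_big_nat => r /andP[_ /c_le cr] do rewrite (expr_layers cr).
under eq_bigr do rewrite big_distrr big_mkcond /=.
rewrite exchange_big_nat; apply: eq_big_nat => s _.
rewrite big_distrr [RHS]big_mkcond /=; apply: eq_bigr => r _.
by case: ifP; rewrite ?mulr0 // mulrC.
Qed.

Lemma sum_expr_round_robin_le (x : nat -> R) (c : nat -> nat) m t :
  (0 < m)%N -> (forall r, 0 <= x r) ->
  (forall r r', (r <= r' < t)%N -> x r <= x r') ->
  (forall r, (r < t)%N -> (c r <= t)%N) ->
  (forall s, (\sum_(0 <= r < t) (c r < s) <= m * s)%N) ->
  \sum_(0 <= r < t) x r * q ^+ ((t.-1 - r) %/ m) <= \sum_(0 <= r < t) x r * q ^+ c r.
Proof.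
move=> m_gt0 x_ge0 x_sorted c_le few_low.
rewrite !sum_expr_layers //; last by move=> r _; rewrite (leq_trans (leq_div _ _)) //; lia.
apply: ler_sum_nat => s _; apply: ler_wpM2l => //.
have -> : \sum_(0 <= r < t | (s <= (t.-1 - r) %/ m)%N) x r = \sum_(0 <= r < t - s * m) x r.
  rewrite [RHS](big_nat_widen _ _ t) ?leq_subr // [LHS]big_nat_cond [RHS]big_nat_cond.
  apply: eq_bigl => r; rewrite leq_divRL //=.
  by case: (ltnP r t) => rt //=; apply/idP/idP; lia.
apply: (sum_prefix_le_sum x_ge0 x_sorted).
have count_split : (\sum_(0 <= r < t) (s <= c r) + \sum_(0 <= r < t) (c r < s) = t)%N.
  rewrite -big_split /= (eq_bigr (fun=> 1%N)) ?sum_nat_const_nat ?muln1 ?subn0 //.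
  by move=> r _; case: leqP.
by have := few_low s; lia.
Qed.

End GeometricRearrangement.

Lemma eq_foldl (T S : Type) (f g : S -> T -> S) z l :
  f =2 g -> foldl f z l = foldl g z l.
Proof. by move=> fg; elim: l z => //= y l IH z; rewrite fg IH. Qed.

Lemma foldl_map (T1 T2 S : Type) (f : S -> T2 -> S) (g : T1 -> T2) z l :
  foldl f z (map g l) = foldl (fun y x => f y (g x)) z l.
Proof. by elim: l z => //= x l IH z. Qed.

Section Loads.
Variables (R : realFieldType) (n m : nat) (a : R) (b : 'I_n -> R) (pi : {perm 'I_n}).
(* [x0] is only a default value for ranks [r >= n]. *)
Variable x0 : 'I_n.

Local Notation completion := (completion (fun _ => 1) (fun i t => b i + a * t) pi).
Local Notation makespan := (makespan (fun _ => 1) (fun i t => b i + a * t) pi).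

Definition job_at (r : nat) : 'I_n := (pi^-1)%g (insubd x0 r).
Definition b_at (r : nat) : R := b (job_at r).
Definition machine_at (rho : {ffun 'I_n -> 'I_m}) (r : nat) : 'I_m := rho (job_at r).

(* A job of [b_at r] started at time [L] on a unit-speed machine completes at
   [(1 + a) * L + b_at r]; [load rho k t] is the completion time of the last of
   the [t] highest-priority jobs assigned to machine [k]. *)
Fixpoint load (rho : {ffun 'I_n -> 'I_m}) (k : 'I_m) (t : nat) : R :=
  if t is t'.+1 then
    if machine_at rho t' == k then (1 + a) * load rho k t' + b_at t' else load rho k t'
  else 0.

Lemma rank_job_at r : (r < n)%N -> pi (job_at r) = r :> nat.
Proof. by move=> rn; rewrite /job_at permKV insubdK. Qed.

Lemma job_at_rank i : job_at (pi i) = i.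
Proof. by rewrite /job_at valKd permK. Qed.

Lemma prio_orderE : prio_order pi = [seq job_at r | r <- iota 0 n].
Proof.
rewrite /prio_order -val_enum_ord -map_comp; apply: eq_map => r /=.
by rewrite /job_at valKd.
Qed.

Lemma foldl_load rho k t :
  foldl (fun L r => (1 + a) * L + b_at r) 0 [seq r <- iota 0 t | machine_at rho r == k]
  = load rho k t.
Proof.
elim: t => [//|t IH].
by rewrite -[in iota _ _]addn1 iotaD filter_cat foldl_cat IH add0n /=; case: ifP.
Qed.

Lemma completionE rho i : completion rho i = (1 + a) * load rho (rho i) (pi i) + b i.
Proof.
have -> : (1 + a) * load rho (rho i) (pi i) + b i = load rho (rho i) (pi i).+1.
  by rewrite /= /machine_at job_at_rank eqxx /b_at job_at_rank.
rewrite /completion /jobs_upto prio_orderE filter_map foldl_map -foldl_load.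
rewrite (@eq_foldl _ _ _ (fun L r => (1 + a) * L + b_at r)); last first.
  by move=> L r; rewrite divr1 /b_at; ring.
congr foldl; have pi_lt : (pi i < n)%N by [].
have -> : iota 0 n = iota 0 (pi i).+1 ++ iota (pi i).+1 (n - (pi i).+1).
  by rewrite -iotaD subnKC.
rewrite filter_cat [X in _ ++ X](@eq_in_filter _ _ pred0); last first.
  move=> r; rewrite mem_iota (subnKC pi_lt) => /andP[ir rn].
  by rewrite /= rank_job_at // leqNgt ir andbF.
rewrite filter_pred0 cats0; apply: eq_in_filter => r; rewrite mem_iota add0n => /andP[_ rlt].
by rewrite /= rank_job_at ?(leq_trans rlt) // -ltnS rlt andbT.
Qed.

Lemma eq_load rho rho' k t :
  (forall r, (r < t)%N -> machine_at rho r = machine_at rho' r) ->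
  load rho k t = load rho' k t.
Proof.
elim: t => //= t IH same; rewrite same // IH // => r rt.
by apply: same; exact: ltnW.
Qed.

Lemma load_idle rho k u t : (u <= t)%N ->
  (forall r, (u <= r < t)%N -> machine_at rho r != k) -> load rho k t = load rho k u.
Proof.
elim: t => [|t IH]; first by rewrite leqn0 => /eqP ->.
rewrite leq_eqVlt => /orP[/eqP -> //|ut] idle.
rewrite /= (negbTE (idle t _)); last by rewrite ltnSn andbT -ltnS.
by apply: IH => // r /andP[ur rt]; apply: idle; rewrite ur ltnW.
Qed.

Lemma exists_idle_machine rho u t : (t - u < m)%N ->
  exists k, forall r, (u <= r < t)%N -> machine_at rho r != k.
Proof.
move=> short; pose used (x : 'I_(t - u)) := machine_at rho (u + x).
have : ~~ ([set: 'I_m] \subset [set used x | x in 'I_(t - u)]).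
  apply/negP => /subset_leq_card; rewrite cardsT card_ord => /leq_trans.
  by move/(_ _ (leq_imset_card _ _)); rewrite card_ord leqNgt short.
case/subsetPn => k _ k_unused; exists k => r /andP[ur rt]; apply/eqP => rk.
have rlt : (r - u < t - u)%N by rewrite ltn_sub2r // (leq_ltn_trans ur).
have used_r : machine_at rho r = used (Ordinal rlt) by rewrite /used subnKC.
by move: k_unused; rewrite -rk used_r imset_f.
Qed.

Hypotheses (a_ge0 : 0 <= a) (b_ge0 : forall i, 0 <= b i).

Lemma rate_gt0 : 0 < 1 + a.
Proof. by rewrite ltr_pwDl. Qed.

Lemma load_ge0 rho k t : 0 <= load rho k t.
Proof.
elim: t => //= t IH; case: ifP => // _.
by rewrite addr_ge0 ?mulr_ge0 ?addr_ge0 ?b_ge0.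
Qed.

Lemma load_le_succ rho k t : load rho k t <= load rho k t.+1.
Proof.
rewrite /=; case: ifP => // _; rewrite mulrDl mul1r -addrA lerDl.
by rewrite addr_ge0 ?mulr_ge0 ?b_ge0 ?load_ge0.
Qed.

Lemma completion_le_makespan (rho : {ffun 'I_n -> 'I_m}) i : completion rho i <= makespan rho.
Proof. exact: le_bigmax. Qed.

Lemma load_le_makespan rho k t : (t <= n)%N -> load rho k t <= makespan rho.
Proof.
elim: t => [_|t IH tn]; first exact: bigmax_ge_id.
rewrite /=; case: eqP => [<-|_]; last exact: IH (ltnW tn).
by have := completion_le_makespan rho (job_at t); rewrite completionE rank_job_at.
Qed.

Hypothesis sbpt : SBPT b pi.

Lemma b_at_sorted r r' : (r <= r')%N -> (r' < n)%N -> b_at r <= b_at r'.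
Proof.
rewrite leq_eqVlt => /orP[/eqP -> //|rr'] r'n.
by apply: sbpt; rewrite !rank_job_at // (ltn_trans rr').
Qed.

(* Total load of the first [t] jobs scheduled round robin backwards from job
   [t.-1]: job [r] is followed on its machine by [(t.-1 - r) %/ m] of them. *)
Definition rr_load (t : nat) : R :=
  \sum_(0 <= r < t) b_at r * (1 + a) ^+ ((t.-1 - r) %/ m).

Lemma rr_load_ge_last t : b_at t <= rr_load t.+1.
Proof.
rewrite /rr_load big_nat_recr //= subnn div0n expr0 mulr1 lerDr.
by apply: sumr_ge0 => r _; rewrite mulr_ge0 ?exprn_ge0 ?addr_ge0 ?b_ge0.
Qed.

Lemma rr_load_next_round d : (0 < m)%N ->
  rr_load (m + d).+1 = \sum_(d.+1 <= r < (m + d).+1) b_at r + (1 + a) * rr_load d.+1.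
Proof.
move=> m_gt0; rewrite /rr_load (@big_cat_nat _ _ _ d.+1) //=; last by lia.
rewrite addrC mulr_sumr; congr (_ + _); apply: eq_big_nat => r rlt.
  by rewrite divn_small ?expr0 ?mulr1 //; lia.
have -> : (m + d - r = (d - r) + 1 * m)%N by lia.
by rewrite divnDMl // addn1 exprS mulrCA.
Qed.

Lemma sum_round_ge d : (0 < m)%N -> (m + d < n)%N ->
  b_at (m + d) + (m%:R - 1) * b_at d <= \sum_(d.+1 <= r < (m + d).+1) b_at r.
Proof.
move=> m_gt0 mdn; rewrite big_nat_recr /= 1?[in X in X <= _]addrC ?lerD2r; last by lia.
have -> : (m%:R - 1) * b_at d = \sum_(d.+1 <= r < m + d) b_at d.
  rewrite sumr_const_nat (_ : m + d - d.+1 = m - 1)%N; last by lia.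
  by rewrite -[in RHS]mulr_natl natrB.
by apply: ler_sum_nat => r rlt; apply: b_at_sorted; lia.
Qed.

Section Equilibrium.
Variable sigma : {ffun 'I_n -> 'I_m}.
Hypotheses (m_gt0 : (0 < m)%N)
  (NE : is_NE (fun _ => 1) (fun i t => b i + a * t) pi sigma).

Let start r := load sigma (machine_at sigma r) r.
Let finish r := (1 + a) * start r + b_at r.

Lemma NE_start_le_load r k : (r < n)%N -> start r <= load sigma k r.
Proof.
move=> rn; have := NE (job_at r) k.
rewrite !completionE ffunE eqxx rank_job_at // lerD2r ler_pM2l ?rate_gt0 //.
rewrite (@eq_load _ sigma) // => r' r'r; rewrite /machine_at ffunE.
case: eqP => // /(congr1 (fun j => pi j : nat)).
by rewrite !rank_job_at ?(ltn_trans r'r) // => r're; move: r'r; rewrite r're ltnn.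
Qed.

Lemma finish_le_succ r : (r.+1 < n)%N -> finish r <= finish r.+1.
Proof.
move=> rn; apply: lerD; last exact: b_at_sorted.
apply: ler_wpM2l; first by rewrite addr_ge0.
exact: le_trans (NE_start_le_load _ (ltnW rn)) (load_le_succ _ _ _).
Qed.

Lemma load_le_finish k r : (r < n)%N -> load sigma k r.+1 <= finish r.
Proof.
elim: r k => [|r IH] k rn; rewrite [load _ _ _.+1]/=.
  by case: eqP => _; rewrite /finish /start /= mulr0 ?add0r ?b_ge0.
case: eqP => [<- //|_].
exact: le_trans (IH k (ltnW rn)) (finish_le_succ rn).
Qed.

Lemma start_first_round t : (t < n)%N -> (t < m)%N -> start t <= 0.
Proof.
move=> tn tm; have [|k idle] := @exists_idle_machine sigma 0 t; first by rewrite subn0.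
by apply: le_trans (NE_start_le_load k tn) _; rewrite (load_idle _ idle).
Qed.

Lemma start_next_round d : (m + d < n)%N -> start (m + d) <= finish d.
Proof.
move=> mdn.
have [|k idle] := @exists_idle_machine sigma d.+1 (m + d); first by lia.
apply: le_trans (NE_start_le_load k mdn) _.
by rewrite (load_idle _ idle) ?load_le_finish //; lia.
Qed.

Lemma start_bound t : (t < n)%N -> (m%:R + a) * start t + b_at t <= rr_load t.+1.
Proof.
elim/ltn_ind: t => t IH tn.
have ma_gt0 : 0 < m%:R + a by rewrite ltr_pwDl ?ltr0n.
have [tm|mt] := ltnP t m.
  have := rr_load_ge_last t; have := start_first_round tn tm.
  by rewrite -(pmulr_rle0 _ ma_gt0); lra.
have [d td] : exists d, t = (m + d)%N by exists (t - m)%N; lia.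
subst t; have dmd : (d < m + d)%N by lia.
have := IH d dmd (ltn_trans dmd tn); have := start_next_round tn; have := sum_round_ge m_gt0 tn.
rewrite rr_load_next_round // /finish => round prev IHd.
have /(ler_wpM2l (ltW ma_gt0)) := prev.
have /(ler_wpM2l (addr_ge0 ler01 a_ge0)) := IHd.
nra.
Qed.

End Equilibrium.

Section AnySchedule.
Variable rho : {ffun 'I_n -> 'I_m}.

Definition later_jobs (k : 'I_m) (r t : nat) : nat :=
  \sum_(r.+1 <= r' < t) (machine_at rho r' == k).

Lemma later_jobs_recr k r t : (r < t)%N ->
  later_jobs k r t.+1 = (later_jobs k r t + (machine_at rho t == k))%N.
Proof. by move=> rt; rewrite /later_jobs big_nat_recr. Qed.

Lemma later_jobs_le k r t : (later_jobs k r t <= t)%N.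
Proof.
apply: (@leq_trans (\sum_(r.+1 <= r' < t) 1)%N).
  by apply: leq_sum => r' _; exact: leq_b1.
by rewrite sum_nat_const_nat muln1 leq_subr.
Qed.

Lemma load_closed k t : load rho k t =
  \sum_(0 <= r < t | machine_at rho r == k) b_at r * (1 + a) ^+ later_jobs k r t.
Proof.
elim: t => [|t IH]; first by rewrite big_geq.
have later0 : later_jobs k t t.+1 = 0%N by rewrite /later_jobs big_geq.
rewrite big_mkcond big_nat_recr //= later0 expr0 mulr1 IH big_mkcond.
case tk: (machine_at rho t == k).
  rewrite mulr_sumr; congr (_ + _); apply: eq_big_nat => r /andP[_ rt].
  by rewrite later_jobs_recr // tk addn1 exprS; case: ifP; rewrite ?mulr0 // mulrCA.
rewrite addr0; apply: eq_big_nat => r /andP[_ rt].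
by rewrite later_jobs_recr // tk addn0.
Qed.

Lemma sum_loadsE t : \sum_(k < m) load rho k t =
  \sum_(0 <= r < t) b_at r * (1 + a) ^+ later_jobs (machine_at rho r) r t.
Proof.
under eq_bigr do rewrite load_closed big_mkcond.
rewrite exchange_big /=; apply: eq_big_nat => r _.
rewrite (bigD1 (machine_at rho r)) //= eqxx big1 ?addr0 // => k /negbTE kr.
by rewrite eq_sym kr.
Qed.

Lemma count_few_later_on k s t :
  (\sum_(0 <= r < t) ((machine_at rho r == k) && (later_jobs k r t < s)) <= s)%N.
Proof.
elim: t s => [|t IH] s; first by rewrite big_geq.
have later0 : later_jobs k t t.+1 = 0%N by rewrite /later_jobs big_geq.
rewrite big_nat_recr //= later0; case tk: (machine_at rho t == k) => /=.
  case: s => [|s]; first by rewrite addn0 big1 // => r _; rewrite ltn0 andbF.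
  rewrite addn1 ltnS; apply: leq_trans (IH s); apply/eq_leq/eq_big_nat => r /andP[_ rt].
  by rewrite later_jobs_recr // tk addn1 ltnS.
rewrite addn0; apply: leq_trans (IH s); apply/eq_leq/eq_big_nat => r /andP[_ rt].
by rewrite later_jobs_recr // tk addn0.
Qed.

(* At most [s] jobs per machine are followed by fewer than [s] jobs. *)
Lemma count_few_later s t :
  (\sum_(0 <= r < t) (later_jobs (machine_at rho r) r t < s) <= m * s)%N.
Proof.
have -> : (\sum_(0 <= r < t) (later_jobs (machine_at rho r) r t < s) =
  \sum_(k < m) \sum_(0 <= r < t) ((machine_at rho r == k) && (later_jobs k r t < s)))%N.
  rewrite exchange_big /=; apply: eq_big_nat => r _.
  rewrite (bigD1 (machine_at rho r)) //= eqxx big1 ?addn0 // => k /negbTE kr.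
  by rewrite eq_sym kr.
apply: (@leq_trans (\sum_(k < m) s)%N); first by apply: leq_sum => k _; exact: count_few_later_on.
by rewrite sum_nat_const card_ord.
Qed.

Lemma rr_load_le_sum_loads t : (0 < m)%N -> (t <= n)%N ->
  rr_load t <= \sum_(k < m) load rho k t.
Proof.
move=> m_gt0 tn; rewrite sum_loadsE /rr_load.
apply: sum_expr_round_robin_le => //.
- by rewrite lerDl.
- by move=> r; exact: b_ge0.
- by move=> r r' /andP[rr' r't]; apply: b_at_sorted rr' (leq_trans r't tn).
- by move=> r _; exact: later_jobs_le.
- by move=> s; exact: count_few_later.
Qed.

End AnySchedule.

End Loads.

Lemma NE_completion_le_makespan (R : realFieldType) (n m : nat) (a : R)
    (b : 'I_n -> R) (pi : {perm 'I_n}) (sigma tau : {ffun 'I_n -> 'I_m}) (i : 'I_n) :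
  (0 < m)%N -> 0 <= a -> (forall i, 0 <= b i) -> SBPT b pi ->
  is_NE (fun _ => 1) (fun i t => b i + a * t) pi sigma ->
  completion (fun _ => 1) (fun i t => b i + a * t) pi sigma i
    <= (2 * m%:R + a * m%:R - 1) / (m%:R + a)
       * makespan (fun _ => 1) (fun i t => b i + a * t) pi tau.
Proof.
move=> m_gt0 a_ge0 b_ge0 sbpt NE.
set M := makespan _ _ _ tau.
have ma_gt0 : 0 < m%:R + a by rewrite ltr_pwDl ?ltr0n.
have start := start_bound i a_ge0 b_ge0 sbpt m_gt0 NE (ltn_ord (pi i)).
have rr := rr_load_le_sum_loads i a_ge0 b_ge0 sbpt tau m_gt0 (ltn_ord (pi i)).
have loads : \sum_(k < m) load a b pi i tau k (pi i).+1 <= m%:R * M.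
  rewrite mulr_natl -[m in X in _ <= X]card_ord -sumr_const ler_sum // => k _.
  exact: load_le_makespan.
have bM : b i <= M.
  apply: le_trans (@completion_le_makespan _ _ _ a b pi tau i).
  by rewrite (completionE _ _ _ i) lerDr mulr_ge0 ?addr_ge0 ?load_ge0.
move: start; rewrite (completionE _ _ _ i) /b_at /machine_at job_at_rank => start.
rewrite mulrAC ler_pdivlMr //.
(* [(m + a) ((1 + a) S + b_i) = (1 + a) ((m + a) S + b_i) + (m - 1) b_i] *)
have := ler_wpM2l (addr_ge0 ler01 a_ge0) (le_trans start (le_trans rr loads)).
have := ler_wpM2l (_ : 0 <= m%:R - 1) bM; rewrite subr_ge0 ler1n => /(_ m_gt0).
move: (load _ _ _ _ _ _ _) => S; nra.
Qed.

Lemma le_scaled_OPT (R : realFieldType) (n m : nat) (s : 'I_m -> R) (p : 'I_n -> R -> R)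
    (pi : {perm 'I_n}) (sigma0 : {ffun 'I_n -> 'I_m}) (x c : R) :
  (forall tau, x <= c * makespan s p pi tau) -> x <= c * OPT s p pi sigma0.
Proof.
move=> x_le; rewrite /OPT; elim/big_ind: _ => [|y z x_y x_z|tau _]; try exact: x_le.
by case: (leP y z).
Qed.

Theorem theorem20 (R : realFieldType) (n m : nat) (a : R) (b : 'I_n -> R)
  (pi : {perm 'I_n}) (sigma : {ffun 'I_n -> 'I_m}) :
  (0 < m)%N -> 0 < a -> (forall i, 0 <= b i) -> SBPT b pi ->
  is_NE (fun _ => 1) (fun i t => b i + a * t) pi sigma ->
  makespan (fun _ => 1) (fun i t => b i + a * t) pi sigma
    <= (2 * m%:R + a * m%:R - 1) / (m%:R + a)
       * OPT (fun _ => 1) (fun i t => b i + a * t) pi sigma.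
Proof.
move=> m_gt0 /ltW a_ge0 b_ge0 sbpt NE.
apply: bigmax_le => [|i _]; apply: le_scaled_OPT => tau; last first.
  exact: NE_completion_le_makespan.
have m_ge1 : 1 <= m%:R :> R by rewrite ler1n.
have am_ge0 : 0 <= a * m%:R by rewrite mulr_ge0.
by rewrite mulr_ge0 ?bigmax_ge_id // divr_ge0 //; lra.
Qed.
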